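(* For every $x\in\mathbb R$, $|e^{ix}-1-ix-(ix)^2/2|\le\varkappa x^2$, where $\varkappa=x^{-2}\sqrt{(\cos x-1+x^2/2)^2+(\sin x-x)^2}\big|_{x=x_0}=0.531551\ldots$ and $x_0=5.487414\ldots$ is the unique root of $8(\cos x-1)+8x\sin x-4x^2\cos x-x^3\sin x=0$ on $(0,2\pi]$, which lies in $(\pi,2\pi)$. *)

From Stdlib Require Import Reals.
From Coquelicot Require Import Coquelicot.
Open Scope R_scope.

Definition cexpi (x : R) : C := (cos x, sin x).

Definition g (x : R) : R :=
  8 * (cos x - 1) + 8 * x * sin x - 4 * x ^ 2 * cos x - x ^ 3 * sin x.

Definition kappa_at (x : R) : R :=
  / (x ^ 2) * sqrt ((cos x - 1 + x ^ 2 / 2) ^ 2 + (sin x - x) ^ 2).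

From Stdlib Require Import Reals Lra ZArith.
From Coquelicot Require Import Coquelicot.
Open Scope R_scope.

(* The squared modulus of e^{ix} - 1 - ix + x^2/2 is
   F(x) = x^4/4 + (x^2 - 2) cos x + 2 - 2 x sin x, and (F(x)/x^4)' = g(x)/x^5.
   Moreover g' = x^2 k and k' = x sin x with k = sin x - x cos x, so k > 0 on
   (0, pi] and k decreases on [pi, 2 pi].  Hence g > 0 on (0, pi], and on
   [pi, 2 pi] g increases while k >= 0 and strictly decreases once k < 0: g has
   exactly one root x0 on (0, 2 pi], and F/x^4 attains its maximum over
   (0, 2 pi] there.  For x >= 2 pi the crude bound F(x) <= x^4/4 + x^2 + 3
   suffices, and F is even.  The digits of x0 and kappa come from interval
   evaluations of sin and cos near x0, obtained from Taylor polynomials at a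
   quarter of the argument and the double-angle formulas twice. *)

Section MeanValueBounds.

Variables (f f' : R -> R) (u v : R).
Hypothesis f_derive : forall c, u <= c <= v -> derivable_pt_lim f c (f' c).

Lemma increment_le_of_derive_le M :
  u <= v -> (forall c, u < c < v -> f' c <= M) -> f v - f u <= M * (v - u).
Proof.
intros Huv Hle; destruct (Rle_lt_or_eq_dec u v Huv) as [Hlt | <-]; [| lra].
destruct (MVT_cor2 f f' u v Hlt f_derive) as [c [-> Hc]].
apply Rmult_le_compat_r; [lra | now apply Hle].
Qed.

Lemma increment_ge_of_derive_ge m :
  u <= v -> (forall c, u < c < v -> m <= f' c) -> m * (v - u) <= f v - f u.
Proof.
intros Huv Hge; destruct (Rle_lt_or_eq_dec u v Huv) as [Hlt | <-]; [| lra].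
destruct (MVT_cor2 f f' u v Hlt f_derive) as [c [-> Hc]].
apply Rmult_le_compat_r; [lra | now apply Hge].
Qed.

Lemma increment_lt_of_derive_lt M :
  u < v -> (forall c, u < c < v -> f' c < M) -> f v - f u < M * (v - u).
Proof.
intros Huv Hlt; destruct (MVT_cor2 f f' u v Huv f_derive) as [c [-> Hc]].
apply Rmult_lt_compat_r; [lra | now apply Hlt].
Qed.

Lemma increment_gt_of_derive_gt m :
  u < v -> (forall c, u < c < v -> m < f' c) -> m * (v - u) < f v - f u.
Proof.
intros Huv Hgt; destruct (MVT_cor2 f f' u v Huv f_derive) as [c [-> Hc]].
apply Rmult_lt_compat_r; [lra | now apply Hgt].
Qed.

End MeanValueBounds.

Definition k (x : R) : R := sin x - x * cos x.

Definition taylor2_err_sq (x : R) : R :=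
  x ^ 4 / 4 + (x ^ 2 - 2) * cos x + 2 - 2 * x * sin x.

Definition kappa_sq (x : R) : R := taylor2_err_sq x / x ^ 4.

Lemma taylor2_err_sq_opp x : taylor2_err_sq (- x) = taylor2_err_sq x.
Proof. unfold taylor2_err_sq; rewrite cos_neg, sin_neg; field. Qed.

Lemma taylor2_err_sq_eq x :
  (cos x - 1 + x ^ 2 / 2) ^ 2 + (sin x - x) ^ 2 = taylor2_err_sq x.
Proof.
pose proof (sin2_cos2 x) as Hsc; unfold Rsqr in Hsc; unfold taylor2_err_sq.
transitivity (x ^ 4 / 4 + (x ^ 2 - 2) * cos x + 1 - 2 * x * sin x
              + (sin x * sin x + cos x * cos x)); [field | rewrite Hsc; ring].
Qed.

Lemma Cmod_taylor2_err x :
  Cmod (cexpi x - 1 - (Ci * RtoC x)%C - ((Ci * RtoC x) ^ 2 / 2)%C)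
  = sqrt (taylor2_err_sq x).
Proof.
rewrite <- taylor2_err_sq_eq; unfold Cmod, cexpi; f_equal; simpl; field.
Qed.

Lemma kappa_at_sqrt x : x <> 0 -> kappa_at x = sqrt (kappa_sq x).
Proof.
intros Hx; unfold kappa_at, kappa_sq; rewrite taylor2_err_sq_eq.
assert (0 < x ^ 2) by (pose proof (pow_nonzero x 2 Hx); pose proof (pow2_ge_0 x); lra).
replace (x ^ 4) with ((x ^ 2) ^ 2) by ring.
rewrite sqrt_div_alt, sqrt_pow2 by (try apply pow_lt; lra).
unfold Rdiv; ring.
Qed.

Lemma taylor2_err_sq_le_large t : 6 <= t -> taylor2_err_sq t <= 0.2825 * t ^ 4.
Proof.
intros Ht; unfold taylor2_err_sq.
assert (Ht2 : 36 <= t ^ 2) by nra.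
assert (Ht4 : 36 * t ^ 2 <= t ^ 4)
  by (replace (t ^ 4) with (t ^ 2 * t ^ 2) by ring; nra).
set (u := (t ^ 2 - 2) * cos t - 2 * t * sin t).
set (w := (t ^ 2 - 2) * sin t + 2 * t * cos t).
(* Lagrange's identity with sin^2 + cos^2 = 1 bounds the oscillating part u by t^2 + 1. *)
assert (Hu : u ^ 2 + w ^ 2 = t ^ 4 + 4).
{ pose proof (sin2_cos2 t) as Hsc; unfold Rsqr in Hsc.
  transitivity (((t ^ 2 - 2) ^ 2 + 4 * t ^ 2) * (sin t * sin t + cos t * cos t));
    [unfold u, w; ring | rewrite Hsc; ring]. }
assert (u < t ^ 2 + 1).
{ destruct (Rlt_or_le u (t ^ 2 + 1)) as [| Hge]; [easy |].
  pose proof (pow2_ge_0 w); nra. }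
replace ((t ^ 2 - 2) * cos t) with (u + 2 * t * sin t) by (unfold u; ring).
lra.
Qed.

Lemma derivable_pt_lim_k x : derivable_pt_lim k x (x * sin x).
Proof. apply is_derive_Reals; unfold k; auto_derive; [easy | ring]. Qed.

Lemma derivable_pt_lim_g x : derivable_pt_lim g x (x ^ 2 * k x).
Proof. apply is_derive_Reals; unfold g, k; auto_derive; [easy | ring]. Qed.

Lemma derivable_pt_lim_kappa_sq x :
  x <> 0 -> derivable_pt_lim kappa_sq x (g x / x ^ 5).
Proof.
intros Hx; apply is_derive_Reals; unfold kappa_sq, taylor2_err_sq, g.
auto_derive; [now apply (pow_nonzero x 4) | field; exact Hx].
Qed.

Lemma continuity_g : continuity g.
Proof.
intros x; apply derivable_continuous_pt; exists (x ^ 2 * k x).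
apply derivable_pt_lim_g.
Qed.

Lemma PI_bounds : 3 < PI <= 4.
Proof. pose proof PI2_3_2; pose proof PI_4; lra. Qed.

Lemma k_pos x : 0 < x <= PI -> 0 < k x.
Proof.
intros Hx.
assert (k 0 = 0) by (unfold k; rewrite sin_0, cos_0; ring).
enough (0 * (x - 0) < k x - k 0) by lra.
apply (increment_gt_of_derive_gt k (fun c => c * sin c));
  [now intros; apply derivable_pt_lim_k | lra |].
intros c Hc; apply Rmult_lt_0_compat; [lra | apply sin_gt_0; lra].
Qed.

Lemma k_nonincreasing u v : PI <= u <= v -> v <= 2 * PI -> k v <= k u.
Proof.
intros Huv Hv.
enough (k v - k u <= 0 * (v - u)) by lra.
apply (increment_le_of_derive_le k (fun c => c * sin c));
  [now intros; apply derivable_pt_lim_k | lra |].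
intros c Hc; assert (sin c <= 0) by (apply sin_le_0; lra); nra.
Qed.

Lemma g_pos x : 0 < x <= PI -> 0 < g x.
Proof.
intros Hx.
assert (g 0 = 0) by (unfold g; rewrite sin_0, cos_0; ring).
enough (0 * (x - 0) < g x - g 0) by lra.
apply (increment_gt_of_derive_gt g (fun c => c ^ 2 * k c));
  [now intros; apply derivable_pt_lim_g | lra |].
intros c Hc; apply Rmult_lt_0_compat; [apply pow_lt; lra | apply k_pos; lra].
Qed.

Lemma g_PI_pos : 0 < g PI.
Proof. unfold g; rewrite cos_PI, sin_PI; pose proof PI_bounds; nra. Qed.

Lemma g_nondecreasing_of_k_nonneg u v :
  PI <= u <= v -> v <= 2 * PI -> 0 <= k v -> g u <= g v.
Proof.
intros Huv Hv Hk.
enough (0 * (v - u) <= g v - g u) by lra.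
apply (increment_ge_of_derive_ge g (fun c => c ^ 2 * k c));
  [now intros; apply derivable_pt_lim_g | lra |].
intros c Hc; apply Rmult_le_pos; [apply pow2_ge_0 |].
pose proof (k_nonincreasing c v); lra.
Qed.

Lemma g_decreasing_of_k_neg u v :
  PI <= u < v -> v <= 2 * PI -> k u < 0 -> g v < g u.
Proof.
intros Huv Hv Hk.
enough (g v - g u < 0 * (v - u)) by lra.
apply (increment_lt_of_derive_lt g (fun c => c ^ 2 * k c));
  [now intros; apply derivable_pt_lim_g | lra |].
intros c Hc; assert (0 < c ^ 2) by (apply pow_lt; lra).
pose proof (k_nonincreasing u c); nra.
Qed.

Lemma g_root_gt_PI x : 0 < x -> g x = 0 -> PI < x.
Proof.
intros Hx Hgx; destruct (Rlt_or_le PI x) as [| Hle]; [easy |].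
pose proof (g_pos x (conj Hx Hle)); lra.
Qed.

Lemma k_neg_at_g_root x0 : 0 < x0 <= 2 * PI -> g x0 = 0 -> k x0 < 0.
Proof.
intros Hx0 Hg; pose proof (g_root_gt_PI x0 (proj1 Hx0) Hg).
destruct (Rlt_or_le (k x0) 0) as [| Hk]; [easy |].
pose proof (g_nondecreasing_of_k_nonneg PI x0); pose proof g_PI_pos; lra.
Qed.

Lemma g_root_unique y1 y2 :
  0 < y1 <= 2 * PI -> 0 < y2 <= 2 * PI -> g y1 = 0 -> g y2 = 0 -> y1 = y2.
Proof.
enough (H : forall y1 y2, 0 < y1 <= 2 * PI -> 0 < y2 <= 2 * PI ->
          g y1 = 0 -> g y2 = 0 -> y1 < y2 -> False).
{ intros; destruct (Rtotal_order y1 y2) as [| []]; [exfalso | | exfalso]; eauto. }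
intros z1 z2 Hz1 Hz2 Hg1 Hg2 Hlt.
pose proof (g_root_gt_PI z1 (proj1 Hz1) Hg1).
pose proof (k_neg_at_g_root z1 Hz1 Hg1).
pose proof (g_decreasing_of_k_neg z1 z2); lra.
Qed.

Section Root.

Variable x0 : R.
Hypotheses (x0_range : 0 < x0 <= 2 * PI) (g_x0 : g x0 = 0).

Lemma g_nonneg_before_root y : 0 < y <= x0 -> 0 <= g y.
Proof.
intros Hy; destruct (Rle_or_lt y PI) as [Hle | HPI].
{ pose proof (g_pos y (conj (proj1 Hy) Hle)); lra. }
destruct (Rle_or_lt 0 (k y)) as [Hk | Hk].
- pose proof (g_nondecreasing_of_k_nonneg PI y); pose proof g_PI_pos; lra.
- destruct (Rle_lt_or_eq_dec y x0 (proj2 Hy)) as [Hlt | ->]; [| lra].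
  pose proof (g_decreasing_of_k_neg y x0); lra.
Qed.

Lemma g_nonpos_after_root y : x0 <= y <= 2 * PI -> g y <= 0.
Proof.
intros Hy; destruct (Rle_lt_or_eq_dec x0 y (proj1 Hy)) as [Hlt | <-]; [| lra].
pose proof (g_root_gt_PI x0 (proj1 x0_range) g_x0).
pose proof (k_neg_at_g_root x0 x0_range g_x0).
pose proof (g_decreasing_of_k_neg x0 y); lra.
Qed.

Lemma kappa_sq_le_root t : 0 < t <= 2 * PI -> kappa_sq t <= kappa_sq x0.
Proof.
intros Ht.
assert (Hder : forall c, 0 < c -> derivable_pt_lim kappa_sq c (g c / c ^ 5))
  by (intros; apply derivable_pt_lim_kappa_sq; lra).
destruct (Rle_or_lt t x0) as [Hle | Hlt].
- enough (0 * (x0 - t) <= kappa_sq x0 - kappa_sq t) by lra.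
  apply (increment_ge_of_derive_ge kappa_sq (fun c => g c / c ^ 5) t x0);
    [intros; apply Hder; lra | easy |].
  intros c Hc; apply Rdiv_le_0_compat;
    [apply g_nonneg_before_root | apply pow_lt]; lra.
- enough (kappa_sq t - kappa_sq x0 <= 0 * (t - x0)) by lra.
  apply (increment_le_of_derive_le kappa_sq (fun c => g c / c ^ 5) x0 t);
    [intros; apply Hder; lra | lra |].
  intros c Hc; assert (0 < c ^ 5) by (apply pow_lt; lra).
  assert (g c <= 0) by (apply g_nonpos_after_root; lra).
  unfold Rdiv; assert (0 < / c ^ 5) by (apply Rinv_0_lt_compat; lra); nra.
Qed.

Lemma kappa_sq_root_sub_le u :
  PI <= u <= x0 -> k u < 0 -> kappa_sq x0 - kappa_sq u <= g u * (x0 - u).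
Proof.
intros Hu Hk.
apply (increment_le_of_derive_le _ (fun c => g c / c ^ 5)); [| easy |].
{ intros c Hc; apply derivable_pt_lim_kappa_sq; pose proof PI_bounds; lra. }
intros c Hc; pose proof PI_bounds.
assert (0 <= g c) by (apply g_nonneg_before_root; lra).
assert (g c < g u) by (apply g_decreasing_of_k_neg; lra).
assert (1 <= c ^ 5) by (rewrite <- (pow1 5); apply pow_incr; lra).
assert (g c / c ^ 5 <= g c); [| lra].
apply Rle_div_l; [lra |]; nra.
Qed.

End Root.

(* [1 <= 2 * sl ^ 2] makes cos (x / 2) = 1 - 2 sin (x / 4) ^ 2 nonpositive,
   which fixes the signs in the interval products. *)
Lemma sin_cos_of_quarter_bounds x sl su cl cu :
  0 <= sl -> 0 <= cl -> 1 <= 2 * sl ^ 2 ->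
  sl <= sin (x / 4) <= su -> cl <= cos (x / 4) <= cu ->
  4 * su * cu * (1 - 2 * su ^ 2) <= sin x <= 4 * sl * cl * (1 - 2 * sl ^ 2) /\
  2 * (1 - 2 * sl ^ 2) ^ 2 - 1 <= cos x <= 2 * (1 - 2 * su ^ 2) ^ 2 - 1.
Proof.
intros Hsl Hcl Hsl2 Hs Hc.
replace x with (2 * (2 * (x / 4))) by field.
rewrite (sin_2a (2 * (x / 4))), (cos_2a_cos (2 * (x / 4))), sin_2a, cos_2a_sin.
set (s := sin (x / 4)) in *; set (c := cos (x / 4)) in *.
assert (Hw : 1 - 2 * su ^ 2 <= 1 - 2 * s * s <= 1 - 2 * sl ^ 2) by nra.
assert (Hp : sl * cl <= s * c <= su * cu) by (split; apply Rmult_le_compat; lra).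
assert (0 <= sl * cl) by nra.
split; split.
- assert (0 <= (su * cu - s * c) * - (1 - 2 * s * s)) by (apply Rmult_le_pos; lra).
  assert (0 <= su * cu * ((1 - 2 * s * s) - (1 - 2 * su ^ 2))) by (apply Rmult_le_pos; lra).
  nra.
- assert (0 <= (s * c - sl * cl) * - (1 - 2 * s * s)) by (apply Rmult_le_pos; lra).
  assert (0 <= sl * cl * ((1 - 2 * sl ^ 2) - (1 - 2 * s * s))) by (apply Rmult_le_pos; lra).
  nra.
- nra.
- nra.
Qed.

(* [INR (fact n)] would be computed in unary; this binary factorial lets [cbv]
   evaluate the Taylor coefficients. *)
Fixpoint Zfact (n : nat) : Z :=
  match n with O => 1%Z | S m => (Z.of_nat (S m) * Zfact m)%Z end.

Lemma INR_fact_Zfact n : INR (fact n) = IZR (Zfact n).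
Proof.
induction n as [| n IH]; [reflexivity |].
rewrite fact_simpl, mult_INR, IH, INR_IZR_INZ, <- mult_IZR; reflexivity.
Qed.

Lemma sin_cos_taylor_bounds y : 0 <= y <= PI / 2 ->
  sin_approx y 9 <= sin y <= sin_approx y 10 /\
  cos_approx y 9 <= cos y <= cos_approx y 10.
Proof.
intros Hy; split; [apply (sin_bound y 4) | apply (cos_bound y 4)]; lra.
Qed.

Ltac eval_taylor H :=
  unfold sin_approx, cos_approx in H; cbn [sum_f_R0] in H;
  unfold sin_term, cos_term in H; rewrite ?INR_fact_Zfact in H;
  cbv -[IZR Rmult Rplus Rminus Rdiv Rinv Ropp pow sin cos Rle Rlt] in H.

Definition x0_lower : R := 5487414 / 1000000.
Definition x0_upper : R := 5487415 / 1000000.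

(* The constants below enclose sin and cos at a quarter of the point, rounded
   outward from the Taylor bounds. *)
Lemma sin_cos_x0_lower :
  -0.7144035273 <= sin x0_lower <= -0.7144035272 /\
  0.6997339496 <= cos x0_lower <= 0.6997339497.
Proof.
destruct (sin_cos_taylor_bounds (x0_lower / 4)) as [Hs Hc].
{ unfold x0_lower; pose proof PI_bounds; lra. }
eval_taylor Hs; eval_taylor Hc.
destruct (sin_cos_of_quarter_bounds x0_lower
  0.98027605802671 0.98027605802672 0.19763311984482 0.19763311984483)
  as [Hsin Hcos]; unfold x0_lower in *; lra.
Qed.

Lemma sin_cos_x0_upper :
  -0.7144028275 <= sin x0_upper <= -0.7144028274 /\
  0.6997346640 <= cos x0_upper <= 0.6997346641.
Proof.
destruct (sin_cos_taylor_bounds (x0_upper / 4)) as [Hs Hc].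
{ unfold x0_upper; pose proof PI_bounds; lra. }
eval_taylor Hs; eval_taylor Hc.
destruct (sin_cos_of_quarter_bounds x0_upper
  0.98027610743496 0.98027610743497 0.19763287477580 0.19763287477581)
  as [Hsin Hcos]; unfold x0_upper in *; lra.
Qed.

Lemma g_x0_lower : 0 < g x0_lower <= 1e-4.
Proof. pose proof sin_cos_x0_lower; unfold g; unfold x0_lower in *; lra. Qed.

Lemma g_x0_upper : g x0_upper < 0.
Proof. pose proof sin_cos_x0_upper; unfold g; unfold x0_upper in *; lra. Qed.

Lemma k_x0_lower : k x0_lower < 0.
Proof. pose proof sin_cos_x0_lower; unfold k; unfold x0_lower in *; lra. Qed.

(* The slack 1e-10 absorbs the growth of kappa_sq from x0_lower to the root,
   at most g x0_lower * (x0_upper - x0_lower) <= 1e-4 * 1e-6. *)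
Lemma kappa_sq_x0_lower :
  0.531551 ^ 2 <= kappa_sq x0_lower /\ kappa_sq x0_lower + 1e-10 < 0.531552 ^ 2.
Proof.
assert (Hpos : x0_lower ^ 4 > 0) by (unfold x0_lower; lra).
pose proof sin_cos_x0_lower; unfold kappa_sq; split.
- rewrite <- Rle_div_r by exact Hpos.
  unfold taylor2_err_sq; unfold x0_lower in *; lra.
- enough (taylor2_err_sq x0_lower / x0_lower ^ 4 < 0.531552 ^ 2 - 1e-10) by lra.
  rewrite Rlt_div_l by exact Hpos.
  unfold taylor2_err_sq; unfold x0_lower in *; lra.
Qed.

Lemma g_root_exists : exists x0, x0_lower < x0 < x0_upper /\ g x0 = 0.
Proof.
pose proof g_x0_lower; pose proof g_x0_upper.
destruct (IVT_cor g x0_lower x0_upper continuity_g) as [x0 [[Hl Hu] Hg]];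
  [unfold x0_lower, x0_upper; lra | nra |].
exists x0; split; [split | easy].
- destruct (Rle_lt_or_eq_dec _ _ Hl) as [| <-]; [easy | lra].
- destruct (Rle_lt_or_eq_dec _ _ Hu) as [| ->]; [easy | lra].
Qed.

Lemma x0_bounds_in_PI_2PI x0 : x0_lower < x0 < x0_upper -> PI < x0 < 2 * PI.
Proof. pose proof PI_bounds; unfold x0_lower, x0_upper; lra. Qed.

Lemma kappa_sq_root_bounds x0 :
  x0_lower < x0 < x0_upper -> g x0 = 0 ->
  0.531551 ^ 2 <= kappa_sq x0 < 0.531552 ^ 2.
Proof.
intros Hx0 Hg; pose proof (x0_bounds_in_PI_2PI x0 Hx0); pose proof PI_bounds.
pose proof kappa_sq_x0_lower; pose proof g_x0_lower.
assert (kappa_sq x0_lower <= kappa_sq x0)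
  by (apply kappa_sq_le_root; unfold x0_lower in *; lra).
assert (kappa_sq x0 - kappa_sq x0_lower <= g x0_lower * (x0 - x0_lower)).
{ apply kappa_sq_root_sub_le; [lra | easy | unfold x0_lower in *; lra | apply k_x0_lower]. }
assert (g x0_lower * (x0 - x0_lower) <= 1e-4 * 1e-6)
  by (apply Rmult_le_compat; unfold x0_lower, x0_upper in *; lra).
lra.
Qed.

Lemma taylor2_err_sq_le_kappa_sq x0 x :
  0 < x0 <= 2 * PI -> g x0 = 0 -> 0.2825 <= kappa_sq x0 ->
  taylor2_err_sq x <= kappa_sq x0 * x ^ 4.
Proof.
intros Hx0 Hg Hkappa.
assert (Hnonneg : forall t, 0 <= t -> taylor2_err_sq t <= kappa_sq x0 * t ^ 4).
{ intros t Ht; destruct (Rle_lt_or_eq_dec 0 t Ht) as [Hpos | <-].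
  - assert (0 < t ^ 4) by (apply pow_lt; lra).
    destruct (Rle_or_lt t (2 * PI)).
    + replace (taylor2_err_sq t) with (kappa_sq t * t ^ 4)
        by (unfold kappa_sq; field; lra).
      apply Rmult_le_compat_r; [lra |].
      apply (kappa_sq_le_root x0); [easy | easy | lra].
    + pose proof PI_bounds; pose proof (taylor2_err_sq_le_large t).
      apply Rle_trans with (0.2825 * t ^ 4); [lra |].
      apply Rmult_le_compat_r; lra.
  - unfold taylor2_err_sq; rewrite cos_0, sin_0; lra. }
destruct (Rle_or_lt 0 x); [now apply Hnonneg |].
rewrite <- taylor2_err_sq_opp; replace (x ^ 4) with ((- x) ^ 4) by ring.
apply Hnonneg; lra.
Qed.

Lemma sqrt_le_sqrt_mul_sq a b x :
  0 <= a -> b <= a * x ^ 4 -> sqrt b <= sqrt a * x ^ 2.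
Proof.
intros Ha Hb.
rewrite <- (sqrt_pow2 (x ^ 2)) by apply pow2_ge_0.
rewrite <- sqrt_mult_alt by exact Ha.
apply sqrt_le_1_alt; replace ((x ^ 2) ^ 2) with (x ^ 4) by ring; exact Hb.
Qed.

Theorem lemma3 :
  exists x0 : R,
    (* x0 is the unique root of g on (0, 2*pi] *)
    (0 < x0 <= 2 * PI /\ g x0 = 0 /\
     (forall y : R, 0 < y <= 2 * PI -> g y = 0 -> y = x0)) /\
    (* it lies in (pi, 2*pi), with x0 = 5.487414... *)
    (PI < x0 < 2 * PI) /\
    (5487414 / 1000000 <= x0 < 5487415 / 1000000) /\
    (* kappa = kappa_at x0 = 0.531551... *)
    (531551 / 1000000 <= kappa_at x0 < 531552 / 1000000) /\
    (* the inequality *)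
    (forall x : R,
       Cmod (cexpi x - 1 - (Ci * RtoC x)%C - ((Ci * RtoC x) ^ 2 / 2)%C)
         <= kappa_at x0 * x ^ 2).
Proof.
destruct g_root_exists as [x0 [Hx0 Hg]].
pose proof (x0_bounds_in_PI_2PI x0 Hx0) as HPI.
assert (Hx0_range : 0 < x0 <= 2 * PI) by (pose proof PI_bounds; lra).
destruct (kappa_sq_root_bounds x0 Hx0 Hg) as [Hlow Hup].
assert (Hkappa : kappa_at x0 = sqrt (kappa_sq x0)) by (apply kappa_at_sqrt; lra).
exists x0; split; [| split; [| split; [| split]]].
- split; [exact Hx0_range | split; [exact Hg |]].
  intros y Hy Hgy; exact (g_root_unique y x0 Hy Hx0_range Hgy Hg).
- exact HPI.
- unfold x0_lower, x0_upper in Hx0; lra.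
- rewrite Hkappa, <- (sqrt_pow2 (531551 / 1000000)), <- (sqrt_pow2 (531552 / 1000000)) by lra.
  split; [apply sqrt_le_1_alt | apply sqrt_lt_1_alt]; lra.
- intros x; rewrite Cmod_taylor2_err, Hkappa.
  apply sqrt_le_sqrt_mul_sq; [lra |].
  apply taylor2_err_sq_le_kappa_sq; [exact Hx0_range | exact Hg | lra].
Qed.
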